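(* Let $L$ be a distributive lattice and $l\in L$. Then $|\delta_l|$ is a weak order unit of $\mathrm{FBL}\langle L\rangle$: if $f\in\mathrm{FBL}\langle L\rangle$ satisfies $|f|\wedge|\delta_l|=0$, then $f=0$.
   Context: $L^*$ is the set of all lattice homomorphisms $x^*:L\to[-1,1]$ (a subset of $\mathbb R^L$ with the product topology); for $x\in L$, $\delta_x:L^*\to\mathbb R$ is $\delta_x(x^* )=x^*(x)$. A function $f:L^*\to\mathbb R$ is positively homogeneous if $f(\lambda x^* )=\lambda f(x^* )$ whenever $\lambda\ge0$ and $\lambda x^*\in L^*$; for such $f$, $\|f\|=\sup\{\sum_{i=1}^m|f(x_i^* )|: m\in\mathbb N,\ x_i^*\in L^*,\ \sup_{x\in L}\sum_{i=1}^m|x_i^*(x)|\le1\}$. $\mathrm{FBL}\langle L\rangle$ is the norm closure of the vector sublattice generated by $\{\delta_x:x\in L\}$ inside the Banach lattice of positively homogeneous functions on $L^*$ with finite norm, with pointwise order and operations. *)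

From mathcomp Require Import all_boot all_order all_algebra.
From mathcomp Require Import reals.
Set Implicit Arguments. Unset Strict Implicit. Unset Printing Implicit Defensive.
Import Order.TTheory GRing.Theory Num.Theory.
Local Open Scope ring_scope.

Section FBL.
Variables (R : realType) (d : Order.disp_t) (L : distrLatticeType d).

Definition isLstar (x : L -> R) : Prop :=
  (forall a, -1 <= x a <= 1) /\
  (forall a b, x (Order.join a b) = Num.max (x a) (x b)) /\
  (forall a b, x (Order.meet a b) = Num.min (x a) (x b)).

Definition delta (a : L) : (L -> R) -> R := fun x => x a.

Definition pos_homogeneous (f : (L -> R) -> R) : Prop :=
  forall (lam : R) (x : L -> R), 0 <= lam -> isLstar x ->
    isLstar (fun a => lam * x a) -> f (fun a => lam * x a) = lam * f x.

(* ||f|| <= c, with ||f|| the sup in the paper *)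
Definition norm_le (f : (L -> R) -> R) (c : R) : Prop :=
  forall (m : nat) (xs : 'I_m -> (L -> R)),
    (forall i, isLstar (xs i)) ->
    (forall a, \sum_(i < m) `|xs i a| <= 1) ->
    \sum_(i < m) `|f (xs i)| <= c.

Inductive gen_sublattice : ((L -> R) -> R) -> Prop :=
  | gen_delta a : gen_sublattice (delta a)
  | gen_add f g : gen_sublattice f -> gen_sublattice g ->
      gen_sublattice (fun x => f x + g x)
  | gen_scale (c : R) f : gen_sublattice f -> gen_sublattice (fun x => c * f x)
  | gen_max f g : gen_sublattice f -> gen_sublattice g ->
      gen_sublattice (fun x => Num.max (f x) (g x))
  | gen_min f g : gen_sublattice f -> gen_sublattice g ->
      gen_sublattice (fun x => Num.min (f x) (g x)).

(* FBL<L>: norm closure of the generated sublattice inside the Banach lattice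
   of positively homogeneous functions on L* with finite norm *)
Definition inFBL (f : (L -> R) -> R) : Prop :=
  pos_homogeneous f /\ (exists c : R, norm_le f c) /\
  (forall eps : R, 0 < eps -> exists g, gen_sublattice g /\
      norm_le (fun x => f x - g x) eps).

End FBL.

(* Every element of FBL<L> is a uniform limit on L^* of lattice-linear
   expressions in the delta_a, each of which is Lipschitz for the sup distance
   on L^*; hence f is continuous on L^* for that distance.  If x lies in L^*
   with x(l) = 0, then y = min(x + t, 1) is again a lattice homomorphism into
   [-1,1], is t-close to x, and has y(l) = t <> 0, so f(y) = 0 by
   disjointness.  Letting t go to 0 gives f(x) = 0. *)
From mathcomp Require Import all_boot all_order all_algebra.
From mathcomp Require Import reals.
From mathcomp Require Import ring lra.
Import Order.TTheory GRing.Theory Num.Theory.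
Local Open Scope ring_scope.

Set Implicit Arguments.
Unset Strict Implicit.

Section RealFacts.
Variable R : realFieldType.

Lemma norm_maxB_le (a b c e p q : R) : `|a - c| <= p -> `|b - e| <= q ->
  `|Num.max a b - Num.max c e| <= p + q.
Proof.
rewrite !ler_norml => /andP[? ?] /andP[? ?].
by case: (leP a b); case: (leP c e) => *; apply/andP; split; lra.
Qed.

Lemma norm_minB_le (a b c e p q : R) : `|a - c| <= p -> `|b - e| <= q ->
  `|Num.min a b - Num.min c e| <= p + q.
Proof.
rewrite !ler_norml => /andP[? ?] /andP[? ?].
by case: (leP a b); case: (leP c e) => *; apply/andP; split; lra.
Qed.

Lemma homo_max (phi : R -> R) : {homo phi : u v / u <= v} ->
  forall u v, phi (Num.max u v) = Num.max (phi u) (phi v).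
Proof.
move=> phi_homo u v; case: (leP u v) => [uv|/ltW vu].
  by rewrite max_r // phi_homo.
by rewrite max_l // phi_homo.
Qed.

Lemma homo_min (phi : R -> R) : {homo phi : u v / u <= v} ->
  forall u v, phi (Num.min u v) = Num.min (phi u) (phi v).
Proof.
move=> phi_homo u v; case: (leP u v) => [uv|/ltW vu].
  by rewrite min_l // phi_homo.
by rewrite min_r // phi_homo.
Qed.

Lemma min_norm_eq0 (a b : R) : Num.min `|a| `|b| = 0 -> b != 0 -> a = 0.
Proof.
move=> min0 b_neq0; apply/eqP; rewrite -normr_le0 leNgt; apply/negP => a_gt0.
by move: min0; apply/eqP; rewrite gt_eqF // lt_min a_gt0 normr_gt0.
Qed.

End RealFacts.

Section FBL.
Variables (R : realType) (d : Order.disp_t) (L : distrLatticeType d).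

Lemma isLstar_homo_comp (phi : R -> R) (x : L -> R) :
  {homo phi : u v / u <= v} -> (forall s, -1 <= s <= 1 -> -1 <= phi s <= 1) ->
  isLstar x -> isLstar (fun a => phi (x a)).
Proof.
move=> phi_homo phi_bnd [x_bnd [x_join x_meet]]; split; [|split] => *.
- exact/phi_bnd/x_bnd.
- by rewrite x_join homo_max.
- by rewrite x_meet homo_min.
Qed.

Lemma isLstar_shift (x : L -> R) (t : R) : 0 <= t -> isLstar x ->
  isLstar (fun a => Num.min (x a + t) 1).
Proof.
move=> t_ge0; apply: (isLstar_homo_comp (phi := fun s => Num.min (s + t) 1)).
  by move=> u v uv; rewrite le_min !ge_min lerD2r uv lexx orbT.
move=> s /andP[? ?].
by case: (leP (s + t) 1) => ?; apply/andP; split; lra.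
Qed.

Lemma shift_dist (x : L -> R) (t : R) : 0 <= t -> isLstar x ->
  forall a, `|x a - Num.min (x a + t) 1| <= t.
Proof.
move=> t_ge0 [x_bnd _] a; have /andP[? ?] := x_bnd a; rewrite ler_norml.
by case: (leP (x a + t) 1) => ?; apply/andP; split; lra.
Qed.

Definition sup_lipschitz (g : (L -> R) -> R) (K : R) : Prop :=
  forall (x y : L -> R) (t : R),
    (forall a, `|x a - y a| <= t) -> `|g x - g y| <= K * t.

Lemma gen_sublattice_lipschitz (g : (L -> R) -> R) :
  gen_sublattice g -> exists2 K : R, 0 <= K & sup_lipschitz g K.
Proof.
elim=> [a|g1 g2 _ [K1 K1_ge0 lip1] _ [K2 K2_ge0 lip2]|c g1 _ [K1 K1_ge0 lip1]
       |g1 g2 _ [K1 K1_ge0 lip1] _ [K2 K2_ge0 lip2]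
       |g1 g2 _ [K1 K1_ge0 lip1] _ [K2 K2_ge0 lip2]].
- by exists 1 => // x y t xy; rewrite mul1r; apply: xy.
- exists (K1 + K2) => [|x y t xy]; first exact: addr_ge0.
  rewrite mulrDl (_ : _ - _ = (g1 x - g1 y) + (g2 x - g2 y)); last by ring.
  by apply: le_trans (ler_normD _ _) _; apply: lerD; [apply: lip1|apply: lip2].
- exists (`|c| * K1) => [|x y t xy]; first by rewrite mulr_ge0.
  by rewrite -mulrBr normrM -mulrA ler_wpM2l //; apply: lip1.
- exists (K1 + K2) => [|x y t xy]; first exact: addr_ge0.
  by rewrite mulrDl; apply: norm_maxB_le; [apply: lip1|apply: lip2].
- exists (K1 + K2) => [|x y t xy]; first exact: addr_ge0.
  by rewrite mulrDl; apply: norm_minB_le; [apply: lip1|apply: lip2].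
Qed.

Lemma norm_le_eval (h : (L -> R) -> R) (c : R) (x : L -> R) :
  isLstar x -> norm_le h c -> `|h x| <= c.
Proof.
move=> x_star h_le; have := h_le 1%N (fun=> x) (fun=> x_star).
rewrite big_ord1; apply=> a; rewrite big_ord1 ler_norml.
by case: x_star => /(_ a) /andP[-> ->] _; rewrite andbT.
Qed.

Lemma inFBL_sup_continuous (f : (L -> R) -> R) (x : L -> R) (eps : R) :
  inFBL f -> isLstar x -> 0 < eps ->
  exists2 t : R, 0 < t & forall y, isLstar y ->
    (forall a, `|x a - y a| <= t) -> `|f x - f y| <= eps.
Proof.
move=> [_ [_ f_approx]] x_star eps_gt0.
have eps3_gt0 : 0 < eps / 3 by rewrite divr_gt0.
have [g [g_gen fg_le]] := f_approx _ eps3_gt0.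
have [K K_ge0 g_lip] := gen_sublattice_lipschitz g_gen.
exists (eps / 3 / (K + 1)) => [|y y_star xy]; first by rewrite divr_gt0 // ltr_wpDl.
have Kt_le : K * (eps / 3 / (K + 1)) <= eps / 3.
  rewrite mulrA ler_pdivrMr ?ltr_wpDl //; nra.
have := g_lip _ _ _ xy; have := norm_le_eval x_star fg_le.
have := norm_le_eval y_star fg_le; rewrite !ler_norml.
move: Kt_le; set Kt := K * _ => ? /andP[? ?] /andP[? ?] /andP[? ?].
by apply/andP; split; lra.
Qed.

End FBL.

Theorem mainTheorem13 (R : realType) (d : Order.disp_t) (L : distrLatticeType d)
  (l : L) (f : (L -> R) -> R) :
  inFBL f ->
  (forall x : L -> R, isLstar x -> Num.min `|f x| `|delta l x| = 0) ->
  forall x : L -> R, isLstar x -> f x = 0.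
Proof.
move=> f_FBL f_disj.
have f_vanish y : isLstar y -> y l != 0 -> f y = 0.
  by move=> y_star; apply: min_norm_eq0; apply: f_disj.
move=> x x_star; have [xl0|] := eqVneq (x l) 0; last exact: f_vanish.
apply/eqP; rewrite -normr_le0.
apply/ler_addgt0Pr => eps eps_gt0; rewrite add0r.
have [t t_gt0 f_cont] := inFBL_sup_continuous f_FBL x_star eps_gt0.
have t_ge0 := ltW t_gt0.
pose y a := Num.min (x a + t) 1.
have y_star : isLstar y by apply: isLstar_shift.
have fy0 : f y = 0.
  by apply: f_vanish y_star _; rewrite /y xl0 add0r gt_eqF // lt_min t_gt0 ltr01.
by rewrite -[f x]subr0 -fy0; apply: f_cont => //; apply: shift_dist.
Qed.
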